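(* Let $S=\{(x_1,x_2)\in\mathbb{R}^2:x_2-x_1^2\ge0\}$, $\tilde S^{o}=\{(x_0,x_1,x_2):x_0x_2-x_1^2\ge0,\ x_0>0\}$, $\tilde S^{c}=\{(x_0,x_1,x_2):x_0x_2-x_1^2\ge0,\ x_0\ge0\}$, and $\tilde G=\{X_0,\ X_0X_2-X_1^2,\ X_0^2+X_1^2+X_2^2-1,\ 1-X_0^2-X_1^2-X_2^2\}$. Then $X_0+X_2>0$ on $\mathrm{conv}(\overline{\tilde S^{o}})\setminus\{0\}$ (so this cone is closed and pointed), $\tilde S^{c}\setminus\overline{\tilde S^{o}}=\{(0,0,x_2):x_2<0\}\neq\emptyset$ (so $S$ is not closed at $\infty$), and $\widetilde{\mathrm{TH}}_k(\tilde G)=\mathbb{R}^2$ for every $k\ge1$; in particular $\bigcap_k\widetilde{\mathrm{TH}}_k(\tilde G)\neq\overline{\mathrm{conv}(S)}=S$.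
   Context: For a finite set $H$ of polynomials, $\mathcal{Q}_k(H)=\{\sum_{j}\sigma_jh_j:h_0=1,\ \sigma_j\text{ sums of squares},\ \deg(\sigma_jh_j)\le2k\}$. $\widetilde{\mathrm{TH}}_k(\tilde G)=\{(x_1,x_2):\tilde l(1,x_1,x_2)\ge0\ \forall\tilde l\in\mathcal{Q}_k(\tilde G)\text{ that is a linear form in }(X_0,X_1,X_2)\text{ or }0\}$. A closed convex cone $K$ is pointed if $K\cap(-K)=\{0\}$; $S$ is closed at $\infty$ if $\overline{\tilde S^{o}}=\tilde S^{c}$. *)

(* The ambient field is an arbitrary real field R
   (the paper's R is the instance R = reals). *)
From HB Require Import structures.
From mathcomp Require Import all_boot all_order all_algebra.
Set Implicit Arguments. Unset Strict Implicit. Unset Printing Implicit Defensive.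
Import Order.TTheory GRing.Theory Num.Theory.
Local Open Scope ring_scope.

Section Defs.
Variable R : realFieldType.

Definition cmp {n} (x : 'rV[R]_n) (i : 'I_n) : R := x 0 i.

Definition i0 : 'I_3 := @Ordinal 3 0 isT.
Definition i1 : 'I_3 := @Ordinal 3 1 isT.
Definition i2 : 'I_3 := @Ordinal 3 2 isT.
Definition j0 : 'I_2 := @Ordinal 2 0 isT.
Definition j1 : 'I_2 := @Ordinal 2 1 isT.

Definition pt3 (a b c : R) : 'rV[R]_3 := \row_(i < 3) [:: a; b; c]`_i.
Definition pt2 (a b : R) : 'rV[R]_2 := \row_(i < 2) [:: a; b]`_i.

Definition rclosure {n} (A : 'rV[R]_n -> Prop) (x : 'rV[R]_n) : Prop :=
  forall e : R, 0 < e -> exists2 y, A y & forall i, `|x 0 i - y 0 i| < e.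

Definition convhull {n} (A : 'rV[R]_n -> Prop) (x : 'rV[R]_n) : Prop :=
  exists m (w : 'I_m -> R) (p : 'I_m -> 'rV[R]_n),
    [/\ forall j, 0 <= w j, \sum_j w j = 1, forall j, A (p j)
      & x = \sum_j w j *: p j].

Definition S_set (x : 'rV[R]_2) : Prop := cmp x j1 - cmp x j0 ^+ 2 >= 0.
Definition So_set (x : 'rV[R]_3) : Prop :=
  cmp x i0 * cmp x i2 - cmp x i1 ^+ 2 >= 0 /\ cmp x i0 > 0.
Definition Sc_set (x : 'rV[R]_3) : Prop :=
  cmp x i0 * cmp x i2 - cmp x i1 ^+ 2 >= 0 /\ cmp x i0 >= 0.

(* X2 is the outer variable, X1 the middle one, X0 the inner one. *)
Definition mpoly := {poly {poly {poly R}}}.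
Definition X0 : mpoly := ('X : {poly R})%:P%:P.
Definition X1 : mpoly := ('X : {poly {poly R}})%:P.
Definition X2 : mpoly := 'X.
Definition cst (a : R) : mpoly := a%:P%:P%:P.

Definition ev (p : mpoly) (a b c : R) : R := p.[c%:P%:P].[b%:P].[a].

(* total degree (the zero polynomial gets degree 0) *)
Definition tdeg1 (p : {poly R}) : nat := (size p).-1.
Definition tdeg2 (p : {poly {poly R}}) : nat :=
  \max_(i < size p) (i + tdeg1 p`_i)%N.
Definition tdeg (p : mpoly) : nat := \max_(i < size p) (i + tdeg2 p`_i)%N.

Definition sos (p : mpoly) : Prop :=
  exists s : seq mpoly, p = \sum_(q <- s) q ^+ 2.

(* truncated quadratic module Q_k(H), with h_0 = 1 *)
Definition Qmod (k : nat) (H : seq mpoly) (f : mpoly) : Prop :=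
  exists sig : 'I_(size H).+1 -> mpoly,
    [/\ forall j, sos (sig j),
        forall j, leq (tdeg (sig j * nth (1 : mpoly) (1 :: H) j)) (2 * k)%N
      & f = \sum_j sig j * nth (1 : mpoly) (1 :: H) j].

Definition linform (f : mpoly) : Prop :=
  exists a0 a1 a2 : R, f = cst a0 * X0 + cst a1 * X1 + cst a2 * X2.

Definition THk (k : nat) (H : seq mpoly) (x : 'rV[R]_2) : Prop :=
  forall l : mpoly, Qmod k H l -> linform l -> ev l 1 (cmp x j0) (cmp x j1) >= 0.

Definition Gt : seq mpoly :=
  [:: X0; X0 * X2 - X1 ^+ 2; X0 ^+ 2 + X1 ^+ 2 + X2 ^+ 2 - 1;
      1 - X0 ^+ 2 - X1 ^+ 2 - X2 ^+ 2].

End Defs.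

From HB Require Import structures.
From mathcomp Require Import all_boot all_order all_algebra.
From mathcomp Require Import ring lra.
Import Order.TTheory GRing.Theory Num.Theory.
Set Implicit Arguments. Unset Strict Implicit. Unset Printing Implicit Defensive.
Local Open Scope ring_scope.

(* Evaluation is a ring morphism, so every element of the
      truncated quadratic module Q_k(Gt) is nonnegative where the generators
      are, i.e. on the unit-sphere section of Sc; by homogeneity a linear
      form of Q_k(Gt) is nonnegative on all of Sc.  Since Sc contains both
      rays (0, 0, +-1) and the points (6, 2v, 8 + v^2) for every v, such a
      form is a X0 with a >= 0, so TH_k(Gt) is the whole plane.
   2. Cones.  An intersection of closed half-spaces is convex and closed.
      The psd cone {a, c >= 0, b^2 <= a c} is the intersection of the
      half-spaces given by the quadratic forms a s^2 + 2 b s t + c t^2, and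
      it is the closure of So; hence it is the cone K of the theorem, on
      which X0 + X2 is positive away from 0.  Sc \ cl(So) is then computed.
   3. The parabola S is the intersection of its tangent half-planes, so it is
      its own closed convex hull. *)

Section Evaluation.
Variable R : realFieldType.
Implicit Types (a b c : R) (p : mpoly R).

(* Evaluation at (a, b, c) is the composite of three Horner evaluations, hence
   a ring morphism; this gives all its algebraic properties at once. *)
Definition evm a b c : {rmorphism mpoly R -> R} :=
  horner_eval a \o horner_eval b%:P \o horner_eval c%:P%:P.

Lemma evE p a b c : ev p a b c = evm a b c p.
Proof. by []. Qed.

Lemma evm_X0 a b c : evm a b c (X0 R) = a.
Proof. by rewrite /= !horner_evalE /X0 !hornerC hornerX. Qed.

Lemma evm_X1 a b c : evm a b c (X1 R) = b.
Proof. by rewrite /= !horner_evalE /X1 hornerC hornerX hornerC. Qed.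

Lemma evm_X2 a b c : evm a b c (X2 R) = c.
Proof. by rewrite /= !horner_evalE /X2 hornerX !hornerC. Qed.

Lemma evm_cst a b c r : evm a b c (cst r) = r.
Proof. by rewrite /= !horner_evalE /cst !hornerC. Qed.

Lemma evm_linform a0 a1 a2 a b c :
  evm a b c (cst a0 * X0 R + cst a1 * X1 R + cst a2 * X2 R) = a0 * a + a1 * b + a2 * c.
Proof. by rewrite !rmorphD !rmorphM !evm_cst evm_X0 evm_X1 evm_X2. Qed.

Lemma sos_nonneg p a b c : sos p -> 0 <= evm a b c p.
Proof.
by case=> s ->; rewrite rmorph_sum sumr_ge0 // => q _; rewrite rmorphXn sqr_ge0.
Qed.

Lemma Qmod_nonneg k (H : seq (mpoly R)) f a b c :
  (forall h, h \in H -> 0 <= evm a b c h) -> Qmod k H f -> 0 <= evm a b c f.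
Proof.
move=> H_ge0 [sig [sig_sos _ ->]]; rewrite rmorph_sum sumr_ge0 // => j _.
rewrite rmorphM mulr_ge0 //; first exact: sos_nonneg.
have : nth 1 (1 :: H) j \in 1 :: H by exact: mem_nth.
by rewrite inE => /predU1P [->|/H_ge0]; rewrite ?rmorph1.
Qed.
End Evaluation.

Section ThetaBodies.
Variable R : realFieldType.
Implicit Types (a b c D : R).

Lemma Gt_nonneg a b c : 0 <= a -> b ^+ 2 <= a * c -> a ^+ 2 + b ^+ 2 + c ^+ 2 = 1 ->
  forall h, h \in Gt R -> 0 <= evm a b c h.
Proof.
move=> a_ge0 bac sphere; rewrite /Gt.
(* abstracting the variables keeps rewriting from unfolding polynomials *)
move: (evm_X0 a b c) (evm_X1 a b c) (evm_X2 a b c).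
move: (X0 R) (X1 R) (X2 R) => x0 x1 x2 ev0 ev1 ev2 h.
rewrite !inE => /or4P [] /eqP ->;
  rewrite ?rmorphB ?rmorphD ?rmorphM ?rmorphXn ?rmorph1 ev0 ?ev1 ?ev2 //.
- by rewrite subr_ge0.
- by rewrite sphere subrr.
- by rewrite -!addrA -!opprD !addrA sphere subrr.
Qed.

(* By homogeneity, a linear form of Q_k(Gt) is nonnegative on every point of
   the cone Sc whose euclidean norm D lies in R. *)
Lemma Qmod_Gt_linear_nonneg k a0 a1 a2 :
  Qmod k (Gt R) (cst a0 * X0 R + cst a1 * X1 R + cst a2 * X2 R) ->
  forall a b c D, 0 < D -> 0 <= a -> b ^+ 2 <= a * c ->
    a ^+ 2 + b ^+ 2 + c ^+ 2 = D ^+ 2 -> 0 <= a0 * a + a1 * b + a2 * c.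
Proof.
move=> inQ a b c D D_gt0 a_ge0 bac norm.
have D_neq0 : D != 0 by rewrite gt_eqF.
have scaled_base : forall h, h \in Gt R -> 0 <= evm (a / D) (b / D) (c / D) h.
  apply: Gt_nonneg; first by rewrite divr_ge0 // ltW.
    rewrite -subr_ge0.
    have -> : a / D * (c / D) - (b / D) ^+ 2 = (a * c - b ^+ 2) / D ^+ 2 by field.
    by rewrite divr_ge0 ?subr_ge0 ?sqr_ge0.
  have -> : (a / D) ^+ 2 + (b / D) ^+ 2 + (c / D) ^+ 2 =
            (a ^+ 2 + b ^+ 2 + c ^+ 2) / D ^+ 2 by field.
  by rewrite norm divff // expf_neq0.
have := Qmod_nonneg scaled_base inQ; rewrite evm_linform.
have -> : a0 * (a / D) + a1 * (b / D) + a2 * (c / D) = (a0 * a + a1 * b + a2 * c) / D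
  by field.
by rewrite pmulr_lge0 // invr_gt0.
Qed.

(* The linear forms nonnegative on (the Pythagorean points of) Sc are the
   nonnegative multiples of X0: Sc contains the ray (0, 0, -1), the ray
   (0, 0, 1), and points (6, 2v, 8 + v^2) of norm 10 + v^2 for every v. *)
Lemma Sc_dual a0 a1 a2 :
  (forall a b c D, 0 < D -> 0 <= a -> b ^+ 2 <= a * c ->
    a ^+ 2 + b ^+ 2 + c ^+ 2 = D ^+ 2 -> 0 <= a0 * a + a1 * b + a2 * c) ->
  [/\ 0 <= a0, a1 = 0 & a2 = 0].
Proof.
move=> nonneg.
have at_unit : forall a b c, 0 <= a -> b ^+ 2 <= a * c ->
    a ^+ 2 + b ^+ 2 + c ^+ 2 = 1 -> 0 <= a0 * a + a1 * b + a2 * c.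
  by move=> a b c ? ? norm; apply: (nonneg _ _ _ 1); rewrite ?expr1n.
have at_e0 : 0 <= a0 * 1 + a1 * 0 + a2 * 0.
  by apply: at_unit; rewrite ?expr0n ?expr1n /=; lra.
have at_e2 : 0 <= a0 * 0 + a1 * 0 + a2 * 1.
  by apply: at_unit; rewrite ?expr0n ?expr1n /=; lra.
have at_minus_e2 : 0 <= a0 * 0 + a1 * 0 + a2 * -1.
  by apply: at_unit; rewrite ?expr0n ?sqrrN ?expr1n /=; lra.
have a2_eq0 : a2 = 0 by lra.
split; [lra | | by []].
(* if a1 != 0, choose v with a1 v = -(3 a0 + 1): the form is -2 at (6, 2v, 8 + v^2) *)
apply/eqP/negP => /negP a1_neq0.
pose v := - (3 * a0 + 1) / a1.
have a1v : a1 * v = - (3 * a0 + 1) by rewrite /v; field.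
have v2_ge0 : 0 <= v ^+ 2 := sqr_ge0 v.
have : 0 <= a0 * 6 + a1 * (2 * v) + a2 * (8 + v ^+ 2).
  by apply: (nonneg _ _ _ (10 + v ^+ 2)); [lra | lra | nra | ring].
have -> : a1 * (2 * v) = 2 * (a1 * v) by ring.
rewrite a1v a2_eq0; lra.
Qed.

Lemma THk_Gt_full k (x : 'rV[R]_2) : THk k (Gt R) x.
Proof.
move=> l inQ [a0 [a1 [a2 l_def]]]; rewrite l_def in inQ *.
have [a0_ge0 -> ->] := Sc_dual (Qmod_Gt_linear_nonneg inQ).
by rewrite evE evm_linform !mul0r !addr0 mulr1.
Qed.
End ThetaBodies.

Section Halfspaces.
Variables (R : realFieldType) (n : nat).
Implicit Types (x y : 'rV[R]_n) (A B : 'rV[R]_n -> Prop).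

Lemma convhull_self A x : A x -> convhull A x.
Proof.
by move=> Ax; exists 1%N, (fun=> 1), (fun=> x); split; rewrite ?big_ord1 ?scale1r.
Qed.

Lemma convhull_mono A B x : (forall y, A y -> B y) -> convhull A x -> convhull B x.
Proof. by move=> AB [m [w [p [? ? Ap ?]]]]; exists m, w, p; split => // j; apply: AB. Qed.

Lemma rclosure_self A x : A x -> rclosure A x.
Proof. by move=> Ax e e_gt0; exists x => // i; rewrite subrr normr0. Qed.

Lemma rclosure_mono A B x : (forall y, A y -> B y) -> rclosure A x -> rclosure B x.
Proof. by move=> AB clA e /clA [y /AB By close]; exists y. Qed.

Definition hspaces (T : Type) (u : T -> 'rV[R]_n) (r : T -> R) x : Prop :=
  forall t, r t <= \sum_i u t 0 i * x 0 i.

Variables (T : Type) (u : T -> 'rV[R]_n) (r : T -> R).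

Lemma hspaces_convex x : convhull (hspaces u r) x -> hspaces u r x.
Proof.
case=> m [w [p [w_ge0 w_sum1 p_in ->]]] t.
have -> : \sum_i u t 0 i * (\sum_j w j *: p j) 0 i =
          \sum_j w j * \sum_i u t 0 i * p j 0 i.
  transitivity (\sum_i \sum_j u t 0 i * (w j * p j 0 i)).
    apply: eq_bigr => i _; rewrite summxE mulr_sumr.
    by apply: eq_bigr => j _; rewrite mxE.
  rewrite exchange_big; apply: eq_bigr => j _; rewrite mulr_sumr.
  by apply: eq_bigr => i _; ring.
rewrite -[r t]mul1r -w_sum1 mulr_suml; apply: ler_sum => j _.
by apply: ler_wpM2l; [exact: w_ge0 | exact: p_in].
Qed.

(* ... and closed: a point violating one inequality by d is at sup-distance at
   least d / (1 + sum |u t|) from the set. *)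
Lemma hspaces_closed x : rclosure (hspaces u r) x -> hspaces u r x.
Proof.
move=> cl t; rewrite leNgt; apply/negP => violated.
set d := r t - \sum_i u t 0 i * x 0 i.
set M := 1 + \sum_i `|u t 0 i|.
have M_gt0 : 0 < M by rewrite ltr_wpDr ?sumr_ge0.
have d_gt0 : 0 < d by rewrite subr_gt0.
have [y y_in close] := cl (d / M) (divr_gt0 d_gt0 M_gt0).
have shift : \sum_i u t 0 i * y 0 i - \sum_i u t 0 i * x 0 i
             <= \sum_i `|u t 0 i| * (d / M).
  rewrite -sumrB; apply: ler_sum => i _; rewrite -mulrBr.
  apply: le_trans (ler_norm _) _; rewrite normrM ler_wpM2l //.
  by rewrite distrC ltW.
have bound : \sum_i `|u t 0 i| * (d / M) < d.
  rewrite -mulr_suml (@lt_le_trans _ _ (M * (d / M))) //.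
    by rewrite ltr_pM2r ?divr_gt0 // /M; lra.
  by rewrite mulrC divfK ?gt_eqF.
by have := y_in t; rewrite /d in bound; lra.
Qed.
End Halfspaces.

Section PsdCone.
Variable R : realFieldType.
Implicit Types (x : 'rV[R]_3) (a b c s t : R).

Lemma sum3 (F : 'I_3 -> R) : \sum_i F i = F i0 + F i1 + F i2.
Proof.
rewrite !big_ord_recl big_ord0 addr0 addrA.
by congr (F _ + F _ + F _); apply: val_inj.
Qed.

Lemma ord3P (P : 'I_3 -> Prop) : P i0 -> P i1 -> P i2 -> forall i, P i.
Proof.
move=> P0 P1 P2 i; have : i \in [:: i0; i1; i2] by case: i => -[|[|[|//]]].
by rewrite !inE => /or3P [] /eqP ->.
Qed.

Lemma row3E x : x = pt3 (x 0 i0) (x 0 i1) (x 0 i2).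
Proof. by apply/rowP; apply: ord3P; rewrite mxE. Qed.

(* The closed cone of positive semidefinite 2x2 matrices [[a, b], [b, c]]. *)
Definition psd3 x : Prop :=
  [/\ 0 <= x 0 i0, 0 <= x 0 i2 & x 0 i1 ^+ 2 <= x 0 i0 * x 0 i2].

Lemma psd_quadform a b c : 0 <= a -> 0 <= c -> b ^+ 2 <= a * c ->
  forall s t, 0 <= a * s ^+ 2 + b * (2 * s * t) + c * t ^+ 2.
Proof.
move=> a_ge0 c_ge0 bac s t.
have [a_eq0|a_neq0] := eqVneq a 0.
  rewrite a_eq0 mul0r in bac *.
  have -> : b = 0 by apply/eqP; rewrite -sqrf_eq0 eq_le bac sqr_ge0.
  by rewrite !mul0r !add0r mulr_ge0 ?sqr_ge0.
have a_gt0 : 0 < a by rewrite lt_def a_neq0.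
rewrite -(pmulr_rge0 _ a_gt0).
have -> : a * (a * s ^+ 2 + b * (2 * s * t) + c * t ^+ 2) =
          (a * s + b * t) ^+ 2 + (a * c - b ^+ 2) * t ^+ 2 by ring.
by rewrite addr_ge0 ?sqr_ge0 // mulr_ge0 ?sqr_ge0 ?subr_ge0.
Qed.

(* ... and conversely, nonnegativity of the quadratic form at (1,0), (0,1), (b,-a),
   (c,-b) and (1,-b) forces a >= 0, c >= 0 and b^2 <= a c. *)
Lemma quadform_psd a b c :
  (forall s t, 0 <= a * s ^+ 2 + b * (2 * s * t) + c * t ^+ 2) ->
  [/\ 0 <= a, 0 <= c & b ^+ 2 <= a * c].
Proof.
move=> q_ge0.
have a_ge0 : 0 <= a by have := q_ge0 1 0; rewrite !(expr0n, expr1n) /=; lra.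
have c_ge0 : 0 <= c by have := q_ge0 0 1; rewrite !(expr0n, expr1n) /=; lra.
have q1 : 0 <= a * (a * c - b ^+ 2).
  by have := q_ge0 b (- a); congr (_ <= _); ring.
have q2 : 0 <= c * (a * c - b ^+ 2).
  by have := q_ge0 c (- b); congr (_ <= _); ring.
have q3 : 0 <= a + c * b ^+ 2 - 2 * b ^+ 2.
  by have := q_ge0 1 (- b); congr (_ <= _); ring.
split => //; rewrite leNgt; apply/negP => det_lt0.
have a_eq0 : a = 0 by nra.
have c_eq0 : c = 0 by nra.
rewrite a_eq0 c_eq0 in q3 det_lt0; nra.
Qed.

Definition quad_vector (st : R * R) : 'rV[R]_3 :=
  pt3 (st.1 ^+ 2) (2 * st.1 * st.2) (st.2 ^+ 2).

Lemma psd3_hspaces x : psd3 x <-> hspaces quad_vector (fun=> 0) x.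
Proof.
rewrite /hspaces; split.
  case=> a_ge0 c_ge0 bac [s t]; rewrite sum3 !mxE /= !(mulrC _ (x 0 _)).
  exact: psd_quadform.
move=> q_ge0; apply: quadform_psd => s t.
by have := q_ge0 (s, t); rewrite sum3 !mxE /= !(mulrC _ (x 0 _)).
Qed.

Lemma psd3_convex x : convhull psd3 x -> psd3 x.
Proof.
move=> /(convhull_mono (fun y => proj1 (psd3_hspaces y))) /hspaces_convex.
by move/psd3_hspaces.
Qed.

Lemma psd3_closed x : rclosure psd3 x -> psd3 x.
Proof.
move=> /(rclosure_mono (fun y => proj1 (psd3_hspaces y))) /hspaces_closed.
by move/psd3_hspaces.
Qed.
End PsdCone.

Section Cones.
Variable R : realFieldType.
Implicit Types x : 'rV[R]_3.

Lemma So_psd3 x : So_set x -> psd3 x.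
Proof. by rewrite /So_set /cmp => -[det_ge0 a_gt0]; split; nra. Qed.

(* Adding e/2 to both diagonal entries of a psd matrix makes it positive
   definite, so psd3 lies in the closure of So. *)
Lemma psd3_clSo x : psd3 x -> rclosure (@So_set R) x.
Proof.
case=> a_ge0 c_ge0 bac e e_gt0.
have e2_gt0 : 0 < e / 2 by rewrite divr_gt0.
exists (pt3 (x 0 i0 + e / 2) (x 0 i1) (x 0 i2 + e / 2)).
  by rewrite /So_set /cmp !mxE /=; split; nra.
have lt_e : `|e / 2| < e by rewrite gtr0_norm //; lra.
apply: ord3P; rewrite !mxE /=.
- by rewrite opprD addrA subrr add0r normrN.
- by rewrite subrr normr0.
- by rewrite opprD addrA subrr add0r normrN.
Qed.

Lemma clSo_psd3 x : rclosure (@So_set R) x <-> psd3 x.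
Proof.
split; last exact: psd3_clSo.
by move/(rclosure_mono (@So_psd3)); exact: psd3_closed.
Qed.

Lemma conv_clSo_psd3 x : convhull (rclosure (@So_set R)) x <-> psd3 x.
Proof.
split; first by move/(convhull_mono (fun y => proj1 (clSo_psd3 y))); exact: psd3_convex.
by move=> /clSo_psd3; exact: convhull_self.
Qed.

Lemma psd3_eq0 x : psd3 x -> x 0 i0 = 0 -> x 0 i2 = 0 -> x = 0.
Proof.
case=> _ _ bac a_eq0 c_eq0; rewrite a_eq0 mul0r in bac.
have b_eq0 : x 0 i1 = 0 by apply/eqP; rewrite -sqrf_eq0 eq_le bac sqr_ge0.
by rewrite (row3E x) a_eq0 b_eq0 c_eq0; apply/rowP; apply: ord3P; rewrite !mxE.
Qed.

Lemma psd3_trace_pos x : psd3 x -> x <> 0 -> 0 < x 0 i0 + x 0 i2.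
Proof.
move=> psd_x x_neq0; case: (psd_x) => a_ge0 c_ge0 _.
rewrite lt_def addr_ge0 // andbT; apply/eqP => trace0; apply: x_neq0.
by apply: psd3_eq0 => //; lra.
Qed.

Lemma psd3_pointed x : psd3 x -> psd3 (- x) -> x = 0.
Proof.
move=> psd_x psd_negx; case: (psd_x) psd_negx => a_ge0 c_ge0 _ [].
by rewrite !mxE => a_le0 c_le0 _; apply: psd3_eq0 => //; lra.
Qed.

Lemma Sc_minus_clSo x :
  (Sc_set x /\ ~ rclosure (@So_set R) x) <-> exists2 c : R, c < 0 & x = pt3 0 0 c.
Proof.
rewrite /Sc_set /cmp; split.
  case=> -[det_ge0 a_ge0] /clSo_psd3 not_psd.
  have c_lt0 : x 0 i2 < 0.
    by rewrite ltNge; apply/negP => c_ge0; apply: not_psd; split => //; lra.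
  have a_eq0 : x 0 i0 = 0 by nra.
  have b_eq0 : x 0 i1 = 0.
    by apply/eqP; rewrite -sqrf_eq0 eq_le sqr_ge0 andbT; nra.
  by exists (x 0 i2) => //; rewrite {1}(row3E x) a_eq0 b_eq0.
case=> c c_lt0 ->; rewrite !mxE /=; split; first by split; lra.
by move/clSo_psd3 => [_]; rewrite mxE /=; lra.
Qed.
End Cones.

Section Parabola.
Variable R : realFieldType.
Implicit Types x : 'rV[R]_2.

Lemma sum2 (F : 'I_2 -> R) : \sum_i F i = F j0 + F j1.
Proof.
rewrite !big_ord_recl big_ord0 addr0.
by congr (F _ + F _); apply: val_inj.
Qed.

Definition tangent_vector (t : R) : 'rV[R]_2 := pt2 (- 2 * t) 1.

Lemma S_hspaces x : S_set x <-> hspaces tangent_vector (fun t => - t ^+ 2) x.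
Proof.
rewrite /S_set /cmp /hspaces; split => [S_x t | tangents].
  rewrite sum2 !mxE /= mul1r.
  have := sqr_ge0 (x 0 j0 - t); nra.
by have := tangents (x 0 j0); rewrite sum2 !mxE /=; nra.
Qed.

Lemma clconvS x : rclosure (convhull (@S_set R)) x <-> S_set x.
Proof.
split; last by move=> S_x; apply/rclosure_self/convhull_self.
have convS_tangents y :
    convhull (@S_set R) y -> hspaces tangent_vector (fun t => - t ^+ 2) y.
  by move/(convhull_mono (fun z => proj1 (S_hspaces z)))/hspaces_convex.
by move/(rclosure_mono convS_tangents)/hspaces_closed/S_hspaces.
Qed.
End Parabola.

Theorem mainTheorem18 (R : realFieldType) :
  let K := convhull (rclosure (@So_set R)) in
  [/\ (* X0 + X2 > 0 on convhull(cl So) \ {0} *)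
      (forall x, K x -> x <> 0 -> cmp x i0 + cmp x i2 > 0),
      (* hence K is closed and pointed *)
      (forall x, rclosure K x -> K x) /\ (forall x, K x -> K (- x) -> x = 0),
      (* Sc \ cl So = {(0,0,x2) : x2 < 0}, nonempty *)
      (forall x, (Sc_set x /\ ~ rclosure (@So_set R) x) <->
                 exists2 c : R, c < 0 & x = pt3 0 0 c)
      /\ (exists x, Sc_set x /\ ~ rclosure (@So_set R) x)
      (* S is not closed at infinity *)
      /\ ~ (forall x, rclosure (@So_set R) x <-> Sc_set x),
      (* TH_k(Gt) = R^2 for all k >= 1 *)
      (forall k, (1 <= k)%N -> forall x, THk k (Gt R) x)
    & (* cl(convhull S) = S, and the intersection of the TH_k differs from it *)
      (forall x, rclosure (convhull (@S_set R)) x <-> S_set x) /\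
      ~ (forall x, (forall k, (1 <= k)%N -> THk k (Gt R) x) <->
                   rclosure (convhull (@S_set R)) x)].
Proof.
move=> K.
have K_psd3 x : K x <-> psd3 x := conv_clSo_psd3 x.
have witness : Sc_set (pt3 0 0 (-1 : R)) /\ ~ rclosure (@So_set R) (pt3 0 0 (-1)).
  by apply/Sc_minus_clSo; exists (-1); rewrite ?oppr_lt0.
split.
- by move=> x /K_psd3; exact: psd3_trace_pos.
- split => [x clK | x Kx K_negx].
    by apply/K_psd3/psd3_closed; apply: rclosure_mono clK => y /K_psd3.
  by apply: psd3_pointed; apply/K_psd3.
- split; first exact: Sc_minus_clSo.
  split; first by exists (pt3 0 0 (-1)).
  by move=> clSo_eq_Sc; case: witness => /clSo_eq_Sc clSo_pt; apply.
- by move=> k _ x; exact: THk_Gt_full.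
- split; first exact: clconvS.
  move=> TH_eq_S; have /clconvS : rclosure (convhull (@S_set R)) (pt2 0 (-1)).
    by apply/TH_eq_S => k _; exact: THk_Gt_full.
  by rewrite /S_set /cmp !mxE /=; lra.
Qed.
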